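(* Let $f:\{0,1\}^n\to\{0,1\}$ be a read-once DNF formula with $m$ terms, each containing exactly $n/m$ variables (so every variable occurs in exactly one term). Under unit costs ($c_i=1$ for all $i$) and an arbitrary probability vector $p\in(0,1)^n$, there is a non-adaptive strategy $S$ with $$\mathrm{cost}_{c,p}(f,S)\le \frac{n}{m}\cdot \mathsf{OPT}_{\mathcal A}(f,c,p).$$
   Context: Stochastic Boolean Function Evaluation (SBFE) setup: $f:\{0,1\}^n\to\{0,1\}$ is a known Boolean function, $c\in\mathbb{R}_{>0}^n$ a cost vector and $p\in(0,1)^n$ a probability vector. The unknown input $x\in\{0,1\}^n$ is random with independent coordinates and $\Pr(x_i=1)=p_i$. The value $x_i$ can only be learned by testing variable $i$, at cost $c_i$. A strategy tests variables sequentially until $f(x)$ is determined, i.e. until $f(x')=f(x)$ for every $x'$ agreeing with $x$ on all tested coordinates. An adaptive strategy is a decision tree (the next test may depend on previous outcomes); a non-adaptive strategy is a fixed permutation of $[n]$, with variables tested in that order until $f(x)$ is determined. $\mathrm{cost}_{c,p}(f,S)$ is the expected total cost of tests performed by $S$ for random $x$. $\mathsf{OPT}_{\mathcal A}(f,c,p)$ (resp. $\mathsf{OPT}_{\mathcal N}(f,c,p)$) is the minimum of $\mathrm{cost}_{c,p}(f,S)$ over all adaptive (resp. non-adaptive) strategies. A DNF formula is a disjunction of terms, each a conjunction of literals; it is read-once if no variable is negated and distinct terms contain disjoint sets of variables. *)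

From HB Require Import structures.
From mathcomp Require Import all_boot all_order all_algebra all_fingroup.
From mathcomp Require Import reals.
Set Implicit Arguments. Unset Strict Implicit. Unset Printing Implicit Defensive.
Import Order.TTheory GRing.Theory Num.Theory.
Local Open Scope ring_scope.

Section SBFE.
Variables (R : realType) (n : nat).

Definition input := {ffun 'I_n -> bool}.

Definition prob (p : 'I_n -> R) (x : input) : R :=
  \prod_(i < n) (if x i then p i else 1 - p i).

Definition determined (f : input -> bool) (T : {set 'I_n}) (x : input) : bool :=
  [forall y : input, [forall i in T, y i == x i] ==> (f y == f x)].

(* Adaptive strategies: decision trees; a node tests variable i and
   continues in the subtree selected by the outcome x_i. *)
Inductive dtree : Type :=
  | Leaf : dtree
  | Node : 'I_n -> dtree -> dtree -> dtree.

Fixpoint dt_cost (f : input -> bool) (c : 'I_n -> R) (t : dtree)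
    (T : {set 'I_n}) (x : input) : R :=
  match t with
  | Leaf => 0
  | Node i t0 t1 =>
      if determined f T x then 0
      else c i + dt_cost f c (if x i then t1 else t0) (i |: T) x
  end.

Fixpoint dt_correct (f : input -> bool) (t : dtree) (T : {set 'I_n})
    (x : input) : bool :=
  match t with
  | Leaf => determined f T x
  | Node i t0 t1 =>
      determined f T x || dt_correct f (if x i then t1 else t0) (i |: T) x
  end.

Definition adaptive_strategy (f : input -> bool) (t : dtree) : Prop :=
  forall x : input, dt_correct f t set0 x.

Definition cost_adaptive (f : input -> bool) (c : 'I_n -> R) (p : 'I_n -> R)
    (t : dtree) : R :=
  \sum_(x : input) prob p x * dt_cost f c t set0 x.

(* Non-adaptive strategy: a permutation s of [n]; variables are tested in the
   order s 0, s 1, ... until f(x) is determined.  The j-th test (0-indexed) is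
   performed iff f(x) is not determined by the first j tested variables. *)
Definition prefix (s : {perm 'I_n}) (j : nat) : {set 'I_n} :=
  [set s k | k : 'I_n & (k < j)%N].

Definition cost_nonadaptive (f : input -> bool) (c : 'I_n -> R) (p : 'I_n -> R)
    (s : {perm 'I_n}) : R :=
  \sum_(x : input) prob p x *
    \sum_(j < n) (if determined f (prefix s j) x then 0 else c (s j)).

End SBFE.

(* Monotone (read-once when terms are disjoint) DNF with m terms; term j is the
   conjunction of the (un-negated) variables in T j. *)
Definition dnf (n m : nat) (T : 'I_m -> {set 'I_n}) (x : input n) : bool :=
  [exists j : 'I_m, [forall i in T j, x i]].

Definition read_once (n m : nat) (T : 'I_m -> {set 'I_n}) : Prop :=
  forall j1 j2 : 'I_m, j1 != j2 -> [disjoint T j1 & T j2].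

From Pilot Require Import Defs.
From HB Require Import structures.
From mathcomp Require Import all_boot all_order all_algebra all_fingroup.
From mathcomp Require Import reals.
From mathcomp Require Import ring lra.
Set Implicit Arguments. Unset Strict Implicit. Unset Printing Implicit Defensive.
Import Order.TTheory GRing.Theory Num.Theory.
Local Open Scope ring_scope.

(* Order the terms by decreasing probability q_j = prod_{i in T j}
   p_i of being satisfied and test their variables term after term.  Test
   number j (0-indexed) is performed only if none of the first j %/ k terms is
   satisfied; summing over j, this strategy costs at most k * Phi, where
   Phi = sum_r prod_{u among the first r terms} (1 - q_u) is the expected
   number of terms one inspects, in that order, until one is satisfied.

   Every adaptive strategy costs at least Phi.  Along a run, the
   potential Psi (probability that every touched term fails, times Phi of the
   untouched terms) drops by at most 1 in expectation per test, by an exchange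
   argument on the sorted order, and vanishes once f(x) is determined. *)

Section ProductExpectation.
Variables (R : realType) (n : nat).
Implicit Types (p : 'I_n -> R) (F G : input n -> R) (x : input n) (i : 'I_n).

Definition E p F : R := \sum_(x : input n) prob p x * F x.

(* p is a probability vector (boundary values 0 and 1 are allowed, since
   conditioning on an outcome sets a coordinate to 0 or 1). *)
Definition pvec p := forall k, 0 <= p k <= 1.

(* The marginals after conditioning on the outcome x_i = b. *)
Definition upd p i (b : bool) : 'I_n -> R :=
  fun k => if k == i then b%:R else p k.

Lemma prob_D1 p i x : prob p x =
  (if x i then p i else 1 - p i) * \prod_(k < n | k != i) (if x k then p k else 1 - p k).
Proof. by rewrite /prob (bigD1 i). Qed.

Lemma prob_ge0 p x : pvec p -> 0 <= prob p x.
Proof.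
move=> hp; apply: prodr_ge0 => k _; have /andP[p0 p1] := hp k.
by case: (x k); rewrite ?subr_ge0.
Qed.

Lemma prob_sum p : \sum_(x : input n) prob p x = 1.
Proof.
rewrite /prob -(bigA_distr_bigA (fun i (b : bool) => if b then p i else 1 - p i)).
by apply: big1 => i _; rewrite big_bool /=; ring.
Qed.

Lemma prob_split p i x :
  prob p x = p i * prob (upd p i true) x + (1 - p i) * prob (upd p i false) x.
Proof.
rewrite (prob_D1 p i) (prob_D1 (upd p i true) i) (prob_D1 (upd p i false) i).
have rest b : \prod_(k < n | k != i) (if x k then upd p i b k else 1 - upd p i b k)
    = \prod_(k < n | k != i) (if x k then p k else 1 - p k).
  by apply: eq_bigr => k /negPf ki; rewrite /upd ki.
by rewrite !rest /upd eqxx; case: (x i) => /=; ring.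
Qed.

Lemma prob_upd_eq0 p i b x : x i != b -> prob (upd p i b) x = 0.
Proof.
by move=> xib; rewrite (prob_D1 _ i) /upd eqxx; case: (x i) b xib => [] [] //= _;
  rewrite ?subrr mul0r.
Qed.

Lemma E_ext_supp p F G :
  (forall x, prob p x != 0 -> F x = G x) -> E p F = E p G.
Proof.
move=> FG; apply: eq_bigr => x _.
by case: (eqVneq (prob p x) 0) => [->|/FG ->]; rewrite ?mul0r.
Qed.

Lemma E_ext p F G : (forall x, F x = G x) -> E p F = E p G.
Proof. by move=> FG; apply: E_ext_supp => x _. Qed.

Lemma E_upd_ext p i b F G :
  (forall x, x i = b -> F x = G x) -> E (upd p i b) F = E (upd p i b) G.
Proof.
move=> FG; apply: E_ext_supp => x; case: (eqVneq (x i) b) => [/FG //|/prob_upd_eq0 ->].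
by rewrite eqxx.
Qed.

Lemma E_split p i F :
  E p F = p i * E (upd p i true) F + (1 - p i) * E (upd p i false) F.
Proof.
rewrite /E !mulr_sumr -big_split /=; apply: eq_bigr => x _.
by rewrite (prob_split p i x); ring.
Qed.

Lemma E_const p (c : R) : E p (fun _ => c) = c.
Proof. by rewrite /E -mulr_suml prob_sum mul1r. Qed.

Lemma E_add p F G : E p (fun x => F x + G x) = E p F + E p G.
Proof. by rewrite /E -big_split; apply: eq_bigr => x _; rewrite mulrDr. Qed.

Lemma E_sub p F G : E p (fun x => F x - G x) = E p F - E p G.
Proof. by rewrite /E -sumrB; apply: eq_bigr => x _; rewrite mulrBr. Qed.

Lemma E_sum p (F : nat -> input n -> R) N :
  E p (fun x => \sum_(j < N) F j x) = \sum_(j < N) E p (F j).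
Proof. by rewrite /E; under eq_bigr do rewrite mulr_sumr; rewrite exchange_big. Qed.

Lemma E_le p F G : pvec p -> (forall x, F x <= G x) -> E p F <= E p G.
Proof. by move=> hp FG; apply: ler_sum => x _; apply: ler_wpM2l; [exact: prob_ge0|]. Qed.

Lemma E_ge0 p F : pvec p -> (forall x, 0 <= F x) -> 0 <= E p F.
Proof. by move=> hp F0; rewrite -(E_const p 0); apply: E_le. Qed.

Definition flip i x : input n := [ffun k => if k == i then ~~ x k else x k].
Definition indep i F := forall x, F (flip i x) = F x.

Lemma flipK i : involutive (flip i).
Proof.
by move=> x; apply/ffunP => k; rewrite !ffunE; case: (k == i); rewrite ?negbK.
Qed.

Lemma flip_other i k x : k != i -> flip i x k = x k.
Proof. by rewrite ffunE => /negPf ->. Qed.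

Lemma E_indep p i F : indep i F -> E p F = E (upd p i true) F.
Proof.
move=> Fi; have same : E (upd p i true) F = E (upd p i false) F.
  rewrite /E (reindex_inj (inv_inj (flipK i))) /=; apply: eq_bigr => x _.
  congr (_ * _); last exact: Fi.
  apply: eq_bigr => k _; rewrite /flip ffunE /upd.
  by case: (k == i) => //; case: (x k) => /=; ring.
by rewrite (E_split p i F) -same; ring.
Qed.

Lemma E_mul_coord p i F : indep i F -> E p (fun x => F x * (x i)%:R) = E p F * p i.
Proof.
move=> Fi; rewrite (E_split p i) (E_indep p Fi).
rewrite (@E_upd_ext p i false _ (fun _ => 0)); last by move=> x ->; rewrite mulr0.
rewrite (@E_upd_ext p i true _ F); last by move=> x ->; rewrite mulr1.
by rewrite E_const; ring.
Qed.

Lemma E_mul_prod p F (s : seq 'I_n) : uniq s -> (forall i, i \in s -> indep i F) ->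
  E p (fun x => F x * \prod_(i <- s) (x i)%:R) = E p F * \prod_(i <- s) p i.
Proof.
elim: s => [|i s IH] /=.
  by move=> _ _; rewrite big_nil mulr1; apply: E_ext => x; rewrite big_nil mulr1.
case/andP=> i_notin_s us Fs; rewrite big_cons mulrCA [RHS]mulrC -IH //; last first.
  by move=> j js; apply: Fs; rewrite inE js orbT.
rewrite -E_mul_coord; first by apply: E_ext => x; rewrite big_cons; ring.
move=> x; rewrite Fs ?mem_head //; congr (_ * _); apply: eq_big_seq => j js.
by rewrite flip_other //; apply: contraNneq i_notin_s => <-.
Qed.

End ProductExpectation.

Section TermSequence.
Variables (R : realDomainType) (I : eqType) (w : I -> R).
Hypothesis w01 : forall j, 0 <= w j <= 1.

(* Phi l is the expected number of items of l inspected when they are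
   inspected in the order l and the inspection stops at the first success,
   item j succeeding independently with probability w j. *)
Fixpoint Phi (l : seq I) : R :=
  if l is j :: l' then 1 + (1 - w j) * Phi l' else 0.

Lemma Phi_ge0 l : 0 <= Phi l.
Proof.
elim: l => [|j l IH] //=; have /andP[_ wj1] := w01 j.
by rewrite addr_ge0 // mulr_ge0 // subr_ge0.
Qed.

Lemma Phi_sum l : Phi l = \sum_(r < size l) \prod_(u <- take r l) (1 - w u).
Proof.
elim: l => [|a l IH] /=; first by rewrite big_ord0.
rewrite big_ord_recl /= big_nil IH mulr_sumr; congr (_ + _).
by apply: eq_bigr => r _; rewrite big_cons.
Qed.

(* Exchange argument: when l lists the items by decreasing success
   probability, inspecting j first can only cost more. *)
Lemma Phi_exchange l j : sorted (fun a b => w b <= w a) l -> uniq l -> j \in l ->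
  Phi l <= 1 + (1 - w j) * Phi [seq a <- l | a != j].
Proof.
elim: l => [|a l IH] //= l_sorted /andP[a_notin_l l_uniq].
have a_first : [seq b <- l | b != a] = l.
  by apply/all_filterP/allP => b bl; apply: contraNneq a_notin_l => <-.
rewrite inE eq_sym; case: eqP => [<- _|/eqP aj /= jl]; first by rewrite a_first.
have le_trans_w : transitive (fun a b => w b <= w a).
  by move=> b c d cb bd; exact: le_trans bd cb.
have wja : w j <= w a by have /allP := order_path_min le_trans_w l_sorted; apply.
have IHj := IH (path_sorted l_sorted) l_uniq jl.
have /andP[wa0 wa1] := w01 a; have /andP[wj0 wj1] := w01 j.
set X := Phi [seq b <- l | b != j] in IHj *.
have X0 : 0 <= X := Phi_ge0 _.
have : (1 - w a) * Phi l <= (1 - w a) * (1 + (1 - w j) * X).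
  by apply: ler_wpM2l; rewrite ?subr_ge0.
nra.
Qed.

End TermSequence.

Section Determined.
Variables (n : nat) (f : input n -> bool).

Lemma determinedP (S : {set 'I_n}) (x : input n) :
  reflect (forall y : input n, {in S, y =1 x} -> f y = f x) (determined f S x).
Proof.
apply: (iffP forallP) => [det y yx|det y]; last first.
  by apply/implyP => /forallP yx; apply/eqP/det => i iS; apply/eqP/(implyP (yx i)).
by apply/eqP/(implyP (det y)); apply/forallP => i; apply/implyP => /yx ->.
Qed.

Lemma determined_eq_on (S : {set 'I_n}) (x y : input n) :
  {in S, x =1 y} -> determined f S x -> determined f S y.
Proof.
move=> xy /determinedP det; apply/determinedP => z zy.
by rewrite (det z) ?(det y) // => i iS; rewrite ?zy ?xy.
Qed.

Lemma dt_cost_ge0 (R : realType) (c : 'I_n -> R) (t : dtree n) S x :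
  (forall i, 0 <= c i) -> 0 <= dt_cost f c t S x.
Proof.
move=> c0; elim: t S => [|i t0 IH0 t1 IH1] S //=.
by case: ifP => // _; rewrite addr_ge0 //; case: (x i).
Qed.

End Determined.

Section MonotoneDNF.
Variables (n m : nat) (T : 'I_m -> {set 'I_n}).

Definition touched (S : {set 'I_n}) (j : 'I_m) : bool := [exists i in T j, i \in S].

Lemma touched0 j : touched set0 j = false.
Proof. by apply/existsP => -[i]; rewrite in_set0 andbF. Qed.

(* If the DNF is determined to be true by S, some term lies inside S and is
   satisfied: otherwise setting the untested variables to 0 falsifies it. *)
Lemma determined_true S x : determined (dnf T) S x -> dnf T x ->
  exists j, forall i, i \in T j -> (i \in S) && x i.
Proof.
move=> /determinedP det fx; pose y : input n := [ffun k => (k \in S) && x k].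
have /existsP[j /forallP yj] : dnf T y by rewrite det // => i iS; rewrite ffunE iS.
by exists j => i ij; have := implyP (yj i) ij; rewrite ffunE.
Qed.

(* If the DNF is determined to be false by S, every term has been touched:
   otherwise setting the untested variables to 1 satisfies an untouched term. *)
Lemma determined_false S x : determined (dnf T) S x -> ~~ dnf T x ->
  forall j, touched S j.
Proof.
move=> /determinedP det fx j; pose y : input n := [ffun k => (k \in S) ==> x k].
have : ~~ dnf T y by rewrite det // => i iS; rewrite ffunE iS.
move=> /existsPn /(_ j) /forallPn [i]; rewrite negb_imply ffunE => /andP[ij].
by rewrite negb_imply => /andP[iS _]; apply/existsP; exists i; rewrite ij.
Qed.

End MonotoneDNF.

Section ReadOnceDNF.
Variables (R : realType) (n m : nat) (T : 'I_m -> {set 'I_n}) (p : 'I_n -> R).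
Hypothesis T_read_once : read_once T.
Hypothesis T_cover : forall i : 'I_n, exists j : 'I_m, i \in T j.
Hypothesis p_pvec : pvec p.

Implicit Types (S : {set 'I_n}) (r : 'I_n -> R) (x : input n).

Lemma term_unique (j1 j2 : 'I_m) (i : 'I_n) : i \in T j1 -> i \in T j2 -> j1 = j2.
Proof.
move=> i1 i2; case: (eqVneq j1 j2) => // /T_read_once /disjointFr /(_ i1).
by rewrite i2.
Qed.

Definition q r (j : 'I_m) : R := \prod_(i in T j) r i.

Lemma q_bound r j : pvec r -> 0 <= q r j <= 1.
Proof.
move=> hp; rewrite prodr_ge0 ?prodr_ile1 // => i _; first by case/andP: (hp i).
Qed.

Definition term_order : seq 'I_m := sort (fun a b => q p b <= q p a) (enum 'I_m).

Lemma term_order_sorted : sorted (fun a b => q p b <= q p a) term_order.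
Proof. by apply: sort_sorted => a b; apply: le_total. Qed.

Lemma term_order_uniq : uniq term_order.
Proof. by rewrite sort_uniq enum_uniq. Qed.

Lemma mem_term_order j : j \in term_order.
Proof. by rewrite mem_sort mem_enum. Qed.

(* The state of knowledge after testing S: the marginals r are 0/1 on S
   (the observed outcomes) and agree with p on the untested variables. *)
Definition consistent S r :=
  (forall k, k \in S -> r k = 0 \/ r k = 1) /\ (forall k, k \notin S -> r k = p k).

Definition agrees S r x := forall k, k \in S -> r k = (x k)%:R.

Definition observed S r : input n := [ffun k => if k \in S then r k == 1 else true].

Lemma consistent_pvec S r : consistent S r -> pvec r.
Proof.
move=> [r01 rp] k; case: (boolP (k \in S)) => kS; last by rewrite rp.
by case: (r01 k kS) => ->; rewrite ?lexx ?ler01.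
Qed.

Lemma consistent_upd S r i b : consistent S r -> consistent (i |: S) (upd r i b).
Proof.
move=> [r01 rp]; split=> k; rewrite in_setU1 /upd.
  by case: eqP => [_ _|_ /r01 //]; case: b; [right|left].
by rewrite negb_or => /andP[/negPf -> /rp].
Qed.

Lemma agrees_support S r x : consistent S r -> prob r x != 0 -> agrees S r x.
Proof.
move=> [r01 _] rx k kS; move: rx; rewrite (prob_D1 _ k).
by case: (r01 k kS) => ->; case: (x k); rewrite ?subrr ?mul0r ?eqxx.
Qed.

Lemma agrees_eq_on S r x y : agrees S r x -> agrees S r y -> {in S, x =1 y}.
Proof.
move=> rx ry k kS; have /eqP := rx k kS; rewrite ry // eqr_nat.
by case: (x k); case: (y k).
Qed.

Lemma observed_agrees S r : consistent S r -> agrees S r (observed S r).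
Proof.
move=> [r01 _] k kS; rewrite ffunE kS.
by case: (r01 k kS) => ->; rewrite ?eqxx // eq_sym oner_eq0.
Qed.

(* Lower-bound potential for the expected remaining number of tests: each
   touched term contributes the probability 1 - q r j that it fails, and the
   untouched terms are charged as if evaluated one after the other, in
   term_order, until one succeeds. *)
Definition Psi S r : R :=
  (\prod_(j < m) (if touched T S j then 1 - q r j else 1)) *
  Phi (q p) [seq j <- term_order | ~~ touched T S j].

Hypothesis T_nonempty : forall j : 'I_m, exists i, i \in T j.

(* Once f(x) is known, the potential vanishes: either a touched term is
   satisfied with certainty, or no term is left untouched. *)
Lemma Psi_determined S r x : agrees S r x ->
  determined (dnf T) S x -> Psi S r = 0.
Proof.
move=> rx det; case fx: (dnf T x).
  have [j Tj] := determined_true det fx.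
  have tj : touched T S j.
    by have [i ij] := T_nonempty j; apply/existsP; exists i; rewrite ij; case/andP: (Tj i ij).
  have qj : q r j = 1.
    by apply: big1 => i /Tj /andP[iS xi]; rewrite rx // xi.
  by rewrite /Psi (bigD1 j) //= tj qj subrr !mul0r.
have all_touched := determined_false det (negbT fx).
rewrite /Psi (eq_filter (a2 := pred0)) ?filter_pred0 ?mulr0 // => j.
by rewrite all_touched.
Qed.

Section OneTest.
Variables (i : 'I_n) (j0 : 'I_m).
Hypothesis i_j0 : i \in T j0.

Lemma touched_add S j : touched T (i |: S) j = (j == j0) || touched T S j.
Proof.
apply/existsP/orP => [[k /andP[kj]]|[/eqP ->|/existsP[k /andP[kj kS]]]].
- rewrite in_setU1 => /orP[/eqP ki|kS]; last by right; apply/existsP; exists k; rewrite kj.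
  by left; apply/eqP/(term_unique (i := i)) => //; rewrite -ki.
- by exists i; rewrite i_j0 setU11.
- by exists k; rewrite kj in_setU1 kS orbT.
Qed.

Lemma q_upd_other r b j : j != j0 -> q (upd r i b) j = q r j.
Proof.
move=> jj0; apply: eq_bigr => k kj; rewrite /upd; case: eqP => // ki.
by move: jj0 kj; rewrite ki => /negPf jj0 /term_unique /(_ i_j0) /eqP; rewrite jj0.
Qed.

Lemma q_upd_term r b : q (upd r i b) j0 = b%:R * \prod_(k in T j0 | k != i) r k.
Proof.
rewrite /q (bigD1 i) //= /upd eqxx; congr (_ * _).
by apply: eq_bigr => k /andP[_ /negPf ->].
Qed.

Lemma q_term r : q r j0 = r i * \prod_(k in T j0 | k != i) r k.
Proof. by rewrite /q (bigD1 i). Qed.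

Definition others S r : R := \prod_(j < m | j != j0) (if touched T S j then 1 - q r j else 1).

Lemma Psi_D1 S r : Psi S r = (if touched T S j0 then 1 - q r j0 else 1) * others S r *
  Phi (q p) [seq j <- term_order | ~~ touched T S j].
Proof. by rewrite /Psi (bigD1 j0) //= mulrA. Qed.

Lemma others_upd S r b : others (i |: S) (upd r i b) = others S r.
Proof. by apply: eq_bigr => j jj0; rewrite touched_add (negPf jj0) q_upd_other. Qed.

Lemma others_bound S r : pvec r -> 0 <= others S r <= 1.
Proof.
move=> hr; have factor j : 0 <= (if touched T S j then 1 - q r j else 1) <= 1.
  by case: ifP; rewrite ?lexx ?ler01 // => _; have /andP[q0 q1] := q_bound j hr; lra.
by rewrite prodr_ge0 ?prodr_ile1 // => j _; case/andP: (factor j).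
Qed.

Lemma Psi_mean S r :
  r i * Psi (i |: S) (upd r i true) + (1 - r i) * Psi (i |: S) (upd r i false) =
  (1 - q r j0) * others S r * Phi (q p) [seq j <- term_order | ~~ touched T S j & j != j0].
Proof.
have filter_add : [seq j <- term_order | ~~ touched T (i |: S) j] =
    [seq j <- term_order | ~~ touched T S j & j != j0].
  by apply: eq_filter => j; rewrite touched_add negb_or andbC.
rewrite !Psi_D1 !touched_add eqxx !others_upd filter_add !q_upd_term q_term /=; ring.
Qed.

(* One test decreases the expected potential by at most 1: if j0 was already
   touched the average is unchanged, otherwise use the exchange argument. *)
Lemma Psi_step S r : consistent S r ->
  Psi S r <=
  1 + (r i * Psi (i |: S) (upd r i true) + (1 - r i) * Psi (i |: S) (upd r i false)).
Proof.
move=> r_cons; have hr := consistent_pvec r_cons; rewrite Psi_mean Psi_D1.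
have /andP[o0 o1] := others_bound S hr.
case: (boolP (touched T S j0)) => tj0.
  rewrite (eq_filter (a2 := fun j => ~~ touched T S j)); first by rewrite lerDr.
  by move=> j; case: eqP => [->|]; rewrite ?tj0 ?andbT.
set L := [seq j <- term_order | ~~ touched T S j].
have qp : q r j0 = q p j0.
  apply: eq_bigr => k kj; apply: r_cons.2; apply: contra tj0 => kS.
  by apply/existsP; exists k; rewrite kj.
have exch : Phi (q p) L <= 1 + (1 - q p j0) * Phi (q p) [seq a <- L | a != j0].
  apply: Phi_exchange; first by move=> j; apply: q_bound.
  - apply: sorted_filter term_order_sorted => b c d cb bd; exact: le_trans bd cb.
  - exact: filter_uniq term_order_uniq.
  - by rewrite mem_filter tj0 mem_term_order.
have -> : [seq j <- term_order | ~~ touched T S j & j != j0] = [seq a <- L | a != j0].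
  by rewrite -filter_predI; apply: eq_filter => j; rewrite /= andbC.
rewrite qp; set X := Phi _ [seq a <- L | a != j0] in exch *.
have X0 : 0 <= X by apply: Phi_ge0 => j; apply: q_bound.
have /andP[_ qp1] := q_bound j0 p_pvec.
have : others S r * Phi (q p) L <= others S r * (1 + (1 - q p j0) * X) by apply: ler_wpM2l.
rewrite mul1r; nra.
Qed.

End OneTest.

Lemma agrees_upd S r i b x : consistent S r ->
  (if b then r i else 1 - r i) != 0 -> agrees (i |: S) (upd r i b) x ->
  agrees S r x /\ x i = b.
Proof.
move=> [r01 _] wb rx; have xi : x i = b.
  have := rx i (setU11 _ _); rewrite /upd eqxx; move: (x i) => xb.
  by case: b wb rx xb => _ _ [] /eqP; rewrite eqr_nat.
split=> // k kS; case: (eqVneq k i) => [eki|ki]; last first.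
  by have := rx k (setU1r _ kS); rewrite /upd (negPf ki).
rewrite eki in kS *; rewrite xi; move: wb; case: (r01 i kS) => ->;
  by case: b {xi rx}; rewrite /= ?subrr ?subr0 ?eqxx.
Qed.

(* Each test costs 1 and, by Psi_step, lowers the averaged potential by at
   most 1; at a leaf f(x) is determined and the potential is 0. *)
Lemma Psi_lower_bound (t : dtree n) S r : consistent S r ->
  (forall x, agrees S r x -> dt_correct (dnf T) t S x) ->
  Psi S r <= E r (dt_cost (dnf T) (fun _ => 1) t S).
Proof.
elim: t S r => [|i t0 IH0 t1 IH1] S r r_cons correct.
all: have r_obs := observed_agrees r_cons; have hr := consistent_pvec r_cons.
all: have cost_ge0 t' S' : 0 <= E r (dt_cost (dnf T) (fun _ => 1) t' S')
       by apply: E_ge0 => // x; apply: dt_cost_ge0 => _; apply: ler01.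
  by rewrite (Psi_determined r_obs (correct _ r_obs)); apply: cost_ge0.
case det: (determined (dnf T) S (observed S r)).
  by rewrite (Psi_determined r_obs det); apply: cost_ge0.
have undet x : agrees S r x -> determined (dnf T) S x = false.
  move=> rx; apply: contraFF det; apply: determined_eq_on.
  exact: agrees_eq_on rx r_obs.
pose next x := dt_cost (dnf T) (fun _ => 1 : R) (if x i then t1 else t0) (i |: S) x.
have -> : E r (dt_cost (dnf T) (fun _ => 1) (Node i t0 t1) S) = 1 + E r next.
  rewrite -[in RHS](E_const r 1) -E_add; apply: E_ext_supp => x.
  by move=> /(agrees_support r_cons) /undet /= ->.
have child b : (if b then r i else 1 - r i) * Psi (i |: S) (upd r i b) <=
               (if b then r i else 1 - r i) * E (upd r i b) next.
  have /andP[ri0 ri1] := hr i.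
  case: (eqVneq (if b then r i else 1 - r i) 0) => [->|wb]; first by rewrite !mul0r.
  apply: ler_wpM2l; first by case: b wb; rewrite ?subr_ge0.
  have cons_b := consistent_upd i b r_cons.
  have -> : E (upd r i b) next =
      E (upd r i b) (dt_cost (dnf T) (fun _ => 1) (if b then t1 else t0) (i |: S)).
    by apply: E_upd_ext => x; rewrite /next => ->.
  have correct_b x : agrees (i |: S) (upd r i b) x ->
      dt_correct (dnf T) (if b then t1 else t0) (i |: S) x.
    by move=> /(agrees_upd r_cons wb) [rx xi]; have := correct x rx; rewrite /= undet // xi.
  by case: b {wb} cons_b correct_b => cons_b correct_b; [apply: IH1 | apply: IH0].
have [j0 i_j0] := T_cover i.
have := Psi_step i_j0 r_cons; have /= := child true; have /= := child false.
rewrite (E_split r i next); lra.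
Qed.

(* Every adaptive strategy costs at least Phi(term_order): the potential of
   the initial state, where nothing has been tested yet. *)
Theorem adaptive_lower_bound (t : dtree n) : adaptive_strategy (dnf T) t ->
  Phi (q p) term_order <= cost_adaptive (dnf T) (fun _ => 1) p t.
Proof.
move=> t_correct; have init : consistent set0 p by split=> // k; rewrite in_set0.
have -> : Phi (q p) term_order = Psi set0 p.
  rewrite /Psi big1 ?mul1r => [|j _]; last by rewrite touched0.
  by rewrite (eq_filter (a2 := predT)) ?filter_predT // => j; rewrite touched0.
by apply: Psi_lower_bound init _ => x _; apply: t_correct.
Qed.

End ReadOnceDNF.

Lemma sum_blocks (R : pzSemiRingType) (g : nat -> R) (k M m : nat) :
  (0 < k)%N -> M = (m * k)%N ->
  \sum_(j < M) g (j %/ k)%N = k%:R * \sum_(r < m) g r.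
Proof.
move=> k_pos ->; rewrite -(big_mkord xpredT (fun j => g (j %/ k)%N)) -(big_mkord xpredT g).
elim: m => [|m IH]; first by rewrite mul0n !big_nil mulr0.
rewrite mulSnr (big_cat_nat _ (leq_addr _ _)) //= IH big_nat_recr //= mulrDr.
congr (_ + _); rewrite -{1}[(m * k)%N]add0n big_addn addKn.
rewrite (eq_big_nat _ _ (F2 := fun _ => g m)) ?sumr_const_nat ?subn0 ?mulr_natl //.
by move=> c /andP[_ ck]; rewrite addnC divnMDl // divn_small // addn0.
Qed.

Section UpperBound.
Variables (R : realType) (n m k : nat) (T : 'I_m -> {set 'I_n}) (p : 'I_n -> R).
Hypothesis T_read_once : read_once T.
Hypothesis T_cover : forall i : 'I_n, exists j : 'I_m, i \in T j.
Hypothesis p_pvec : pvec p.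
Hypothesis T_size : forall j, #|T j| = k.

Implicit Types (x : input n) (l : seq 'I_m).

Definition sat (j : 'I_m) x : R := \prod_(i in T j) (x i)%:R.

Definition none_sat l x : R := \prod_(u <- l) (1 - sat u x).

Lemma sat_val j x : sat j x = [forall i in T j, x i]%:R.
Proof.
case: forallP => [all_x|/forallP/forallPn[i]].
  by apply: big1 => i /(implyP (all_x i)) ->.
by rewrite negb_imply => /andP[ij /negPf xi]; rewrite /sat (bigD1 i) //= xi mul0r.
Qed.

Lemma none_sat_ge0 l x : 0 <= none_sat l x.
Proof.
by apply: prodr_ge0 => u _; rewrite sat_val; case: [forall _ in _, _]; rewrite ?subrr ?subr0.
Qed.

Lemma none_sat_cases l x :
  none_sat l x = 1 \/ exists2 a, a \in l & [forall i in T a, x i].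
Proof.
elim: l => [|a l IH]; first by left; rewrite /none_sat big_nil.
rewrite /none_sat big_cons sat_val; case sat_a: [forall i in T a, x i].
  by right; exists a; rewrite ?mem_head.
rewrite subr0 mul1r -/(none_sat l x); case: IH => [->|[b bl sat_b]]; first by left.
by right; exists b; rewrite // inE bl orbT.
Qed.

(* Read-once terms are satisfied independently. *)
Lemma E_none_sat l : uniq l -> E p (none_sat l) = \prod_(u <- l) (1 - q T p u).
Proof.
elim: l => [|a l IH] /=.
  by move=> _; rewrite big_nil -(E_const p 1); apply: E_ext => x; rewrite /none_sat big_nil.
case/andP=> a_notin_l l_uniq; rewrite big_cons -IH //.
have -> : E p (none_sat (a :: l)) =
    E p (fun x => none_sat l x - none_sat l x * \prod_(i <- enum (T a)) (x i)%:R).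
  by apply: E_ext => x; rewrite big_enum /none_sat big_cons /sat; ring.
rewrite E_sub E_mul_prod ?enum_uniq //; first by rewrite big_enum /q; ring.
move=> i; rewrite mem_enum => ia x; apply: eq_big_seq => u ul; congr (1 - _).
apply: eq_bigr => j ju; rewrite flip_other //; apply: contraNneq a_notin_l => ji.
by move: ju; rewrite ji => /(term_unique T_read_once ia) ->.
Qed.

Definition var_seq l : seq 'I_n := flatten [seq enum (T j) | j <- l].

Lemma var_seq_uniq l : uniq l -> uniq (var_seq l).
Proof.
elim: l => [|a l IH] //= /andP[a_notin_l l_uniq]; rewrite cat_uniq enum_uniq IH // andbT.
apply/hasPn => i /flattenP[_ /mapP[u ul ->]]; rewrite !mem_enum => iu.
by apply: contraNN a_notin_l => ia; rewrite (term_unique T_read_once ia iu).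
Qed.

Let order := term_order T p.
Let vars := var_seq order.

Lemma mem_vars i : i \in vars.
Proof.
have [j ij] := T_cover i; apply/flattenP; exists (enum (T j)); last by rewrite mem_enum.
by apply: map_f; apply: mem_term_order.
Qed.

Lemma size_vars : size vars = n.
Proof.
have vars_all : vars =i enum 'I_n by move=> i; rewrite mem_vars mem_enum.
rewrite (perm_size (uniq_perm _ (enum_uniq _) vars_all)) ?size_enum_ord //.
exact/var_seq_uniq/term_order_uniq.
Qed.

Lemma index_var_seq l r a i : uniq l -> a \in take r l -> i \in T a ->
  (index i (var_seq l) < r * k)%N.
Proof.
elim: l r => [|b l IH] [|r] //= /andP[b_notin_l l_uniq].
have size_b : size (enum (T b)) = k by rewrite -cardE T_size.
rewrite inE index_cat mem_enum size_b mulSn => /orP[/eqP-> ia|al ia].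
  by rewrite ia (leq_trans _ (leq_addr _ _)) // -size_b index_mem mem_enum.
have -> : i \in T b = false.
  apply: contraNF b_notin_l => ib; rewrite -(term_unique T_read_once ia ib).
  exact: mem_take al.
by rewrite ltn_add2l IH.
Qed.

(* The non-adaptive strategy: test the terms one after the other, in order of
   decreasing probability of being satisfied. *)
Definition termwise_fun (j : 'I_n) : 'I_n := nth j vars j.

Lemma termwise_fun_inj : injective termwise_fun.
Proof.
move=> j1 j2; rewrite /termwise_fun (set_nth_default j1 j2) ?size_vars // => /eqP.
rewrite nth_uniq ?size_vars //; last exact/var_seq_uniq/term_order_uniq.
by move=> /eqP /val_inj.
Qed.

Definition termwise : {perm 'I_n} := perm termwise_fun_inj.

Lemma mem_prefix i (j : nat) : (index i vars < j)%N -> i \in Defs.prefix termwise j.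
Proof.
move=> ij; have i_lt_n : (index i vars < n)%N.
  by have := index_mem i vars; rewrite mem_vars size_vars.
apply/imsetP; exists (Ordinal i_lt_n); first by rewrite inE.
by rewrite permE /termwise_fun nth_index ?mem_vars.
Qed.

(* Once the variables of the first j %/ k terms are known, no further test is
   made if one of these terms is satisfied. *)
Lemma termwise_test_le x (j : nat) :
  (if determined (dnf T) (Defs.prefix termwise j) x then 0 else 1) <=
  none_sat (take (j %/ k) order) x.
Proof.
case: (none_sat_cases (take (j %/ k) order) x) => [->|[a a_first sat_a]].
  by case: ifP; rewrite ?ler01.
suff -> : determined (dnf T) (Defs.prefix termwise j) x by apply: none_sat_ge0.
apply/determinedP => y yx; have -> : dnf T x by apply/existsP; exists a.
apply/existsP; exists a; apply/forallP => i; apply/implyP => ia.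
rewrite yx ?(implyP (forallP sat_a i) ia) //; apply: mem_prefix.
apply: leq_trans (index_var_seq (term_order_uniq T p) a_first ia) _.
by rewrite leq_divM.
Qed.

Lemma termwise_cost : (0 < k)%N -> n = (m * k)%N ->
  cost_nonadaptive (dnf T) (fun _ => 1) p termwise <= k%:R * Phi (q T p) order.
Proof.
move=> k_pos n_eq.
have -> : cost_nonadaptive (dnf T) (fun _ => 1) p termwise =
    E p (fun x => \sum_(j < n) if determined (dnf T) (Defs.prefix termwise j) x then 0 else 1)
  by [].
have pointwise x : \sum_(j < n) (if determined (dnf T) (Defs.prefix termwise j) x then 0 else 1)
    <= \sum_(j < n) none_sat (take (j %/ k) order) x.
  by apply: ler_sum => j _; apply: termwise_test_le.
apply: le_trans (E_le p_pvec pointwise) _.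
rewrite (E_sum p (fun j => none_sat (take (j %/ k) order))).
under eq_bigr do rewrite E_none_sat ?take_uniq ?term_order_uniq //.
rewrite (sum_blocks (fun r => \prod_(u <- take r order) (1 - q T p u)) k_pos n_eq).
by rewrite Phi_sum size_sort size_enum_ord.
Qed.

End UpperBound.

Unset Implicit Arguments.

Theorem lemma1 (R : realType) (n m : nat) (T : 'I_m -> {set 'I_n})
    (p : 'I_n -> R) :
  (0 < m)%N ->
  read_once T ->
  (forall i : 'I_n, exists j : 'I_m, i \in T j) ->
  (forall j : 'I_m, (#|T j| * m)%N = n) ->
  (forall i : 'I_n, 0 < p i < 1) ->
  exists s : {perm 'I_n},
    forall t : dtree n, adaptive_strategy (dnf T) t ->
      cost_nonadaptive (dnf T) (fun _ => 1) p s
        <= (n%:R / m%:R) * cost_adaptive (dnf T) (fun _ => 1) p t.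
Proof.
move=> m_pos T_read_once T_cover T_size p01.
have p_pvec : pvec p by move=> i; case/andP: (p01 i) => /ltW -> /ltW ->.
case: (posnP n) => [n0|n_pos].
  exists 1%g => t _; have -> : n%:R = 0 :> R by rewrite n0.
  rewrite !mul0r /cost_nonadaptive big1 ?lexx // => x _; rewrite big1 ?mulr0 // => j _.
  by suff : (j < 0)%N by []; rewrite -n0.
pose k := #|T (Ordinal m_pos)|.
have T_size_k j : #|T j| = k by apply/eqP; rewrite -(eqn_pmul2r m_pos) !T_size.
have n_eq : n = (m * k)%N by rewrite -(T_size (Ordinal m_pos)) mulnC.
have k_pos : (0 < k)%N by rewrite lt0n; apply: contraTneq n_pos => k0; rewrite n_eq k0 muln0.
have T_nonempty j : exists i, i \in T j by apply/card_gt0P; rewrite T_size_k.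
have -> : n%:R / m%:R = k%:R :> R.
  by rewrite -(T_size (Ordinal m_pos)) natrM mulfK // pnatr_eq0 -lt0n.
exists (termwise p T_read_once T_cover) => t t_correct.
apply: le_trans (termwise_cost T_read_once T_cover p_pvec T_size_k k_pos n_eq) _.
by rewrite ler_wpM2l ?ler0n // (adaptive_lower_bound T_read_once T_cover p_pvec T_nonempty).
Qed.
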